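(* Fix widths $\mathbf{n}=(n_0,\dots,n_L)$, radial rescaling activations $\rho_i=h_i^{(n_i)}$, a finite batch of training data $\{(x_j,y_j)\}\subseteq\mathbb{R}^{n_0}\times\mathbb{R}^{n_L}$, a cost function $\mathcal C:\mathbb{R}^{n_L}\times\mathbb{R}^{n_L}\to\mathbb{R}$ and a learning rate $\eta>0$, and let $\mathcal L,\mathcal L_{\rm red},\gamma,\gamma_{\rm red},\gamma_{\rm proj}$ be as in the context. Let $(\mathbf{W},\mathbf{b})\in\mathsf{Param}(\mathbf{n})$ and let $\mathbf{W}^{\rm red},\mathbf{b}^{\rm red},\mathbf{Q}$ be the outputs of the QR compression algorithm applied to $(\mathbf{W},\mathbf{b})$. Set $\mathbf{U}=\mathbf{Q}^{-1}\cdot(\mathbf{W},\mathbf{b})-\iota(\mathbf{W}^{\rm red},\mathbf{b}^{\rm red})$. Then for every integer $k\ge0$: $$\gamma^k(\mathbf{W},\mathbf{b})=\mathbf{Q}\cdot\gamma^k\big(\mathbf{Q}^{-1}\cdot(\mathbf{W},\mathbf{b})\big),\qquad \gamma_{\rm proj}^k\big(\mathbf{Q}^{-1}\cdot(\mathbf{W},\mathbf{b})\big)=\iota\big(\gamma_{\rm red}^k(\mathbf{W}^{\rm red},\mathbf{b}^{\rm red})\big)+\mathbf{U}.$$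
   Context: Radial rescaling: for $h:\mathbb{R}\to\mathbb{R}$ piecewise differentiable, $h^{(n)}(v)=h(|v|)v/|v|$ ($v\ne0$), $h^{(n)}(0)=0$. $\mathsf{Param}(\mathbf{n})=\prod_{i=1}^L\mathbb{R}^{n_i\times n_{i-1}}\times\prod_{i=1}^L\mathbb{R}^{n_i}$, with elements $(\mathbf{W},\mathbf{b})$, $\mathbf{W}=(W_i)$, $\mathbf{b}=(b_i)$. The feedforward function $F_{(\mathbf{W},\mathbf{b},\boldsymbol\rho)}=F_L$ with $F_0=\mathrm{id}$, $F_i(x)=\rho_i(W_iF_{i-1}(x)+b_i)$. Loss: $\mathcal L(\mathbf{W},\mathbf{b})=\sum_j\mathcal C(F_{(\mathbf{W},\mathbf{b},\boldsymbol\rho)}(x_j),y_j)$; the loss functions are assumed differentiable so that gradients exist. Reduced widths: $n^{\rm red}_0=n_0$, $n^{\rm red}_i=\min(n_i,n^{\rm red}_{i-1}+1)$ for $1\le i\le L-1$, $n^{\rm red}_L=n_L$. $\mathbb{R}^k\subseteq\mathbb{R}^n$ via the first $k$ coordinates; $\rho^{\rm red}_i=h_i^{(n^{\rm red}_i)}$ is the restriction of $\rho_i$. $\mathcal L_{\rm red}$ on $\mathsf{Param}(\mathbf{n}^{\rm red})$ is defined the same way using activations $\rho^{\rm red}_i$. Gradient descent: $\gamma(\mathbf{W},\mathbf{b})=(\mathbf{W},\mathbf{b})-\eta\nabla_{(\mathbf{W},\mathbf{b})}\mathcal L$ on $\mathsf{Param}(\mathbf{n})$, $\gamma_{\rm red}(\mathbf{V},\mathbf{c})=(\mathbf{V},\mathbf{c})-\eta\nabla_{(\mathbf{V},\mathbf{c})}\mathcal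 L_{\rm red}$ on $\mathsf{Param}(\mathbf{n}^{\rm red})$; $\gamma^k$ is the $k$-fold composition. Projected gradient descent: $\gamma_{\rm proj}(\mathbf{W},\mathbf{b})=\mathrm{Proj}(\gamma(\mathbf{W},\mathbf{b}))$, where $\mathrm{Proj}$ sets to zero, for each $i$, the bottom-left $(n_i-n^{\rm red}_i)\times n^{\rm red}_{i-1}$ submatrix of the weight matrix and the bottom $n_i-n^{\rm red}_i$ entries of the bias vector. $\iota:\mathsf{Param}(\mathbf{n}^{\rm red})\hookrightarrow\mathsf{Param}(\mathbf{n})$ places each matrix/vector in the top-left corner, padding with zeros. Action: $\mathbf{Q}=(Q_1,\dots,Q_{L-1})\in O(n_1)\times\dots\times O(n_{L-1})$ acts by $\mathbf{Q}\cdot(\mathbf{W},\mathbf{b})=((Q_iW_iQ_{i-1}^{-1})_i,(Q_ib_i)_i)$ with $Q_0=\mathrm{id}_{n_0}$, $Q_L=\mathrm{id}_{n_L}$. QR compression algorithm: $A_1=[\,b_1\ W_1\,]$; for $i=1,\dots,L-1$, take a complete QR decomposition $A_i=Q_i\mathrm{Inc}_iR_i$ ($Q_i\in O(n_i)$, $R_i$ upper triangular $n^{\rm red}_i\times(1+n^{\rm red}_{i-1})$, $\mathrm{Inc}_i\in\mathbb{R}^{n_i\times n^{\rm red}_i}$ ones on the main diagonal, zeros elsewhere); $b^{\rm red}_i$ = first column of $R_i$, $W^{\rm red}_i$ = remaining columns; $A_{i+1}=[\,b_{i+1}\ W_{i+1}Q_i\mathrm{Inc}_i\,]$. Finally $b^{\rm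 red}_L,W^{\rm red}_L$ are the first column and the remaining columns of $A_L$. Outputs $\mathbf{Q}=(Q_i)$, $\mathbf{W}^{\rm red},\mathbf{b}^{\rm red}$. *)

From HB Require Import structures.
From mathcomp Require Import all_boot all_order all_algebra.
From mathcomp Require Import all_classical all_reals all_analysis.

Set Implicit Arguments.
Unset Strict Implicit.
Unset Printing Implicit Defensive.

Import Order.TTheory GRing.Theory Num.Theory.
Local Open Scope ring_scope.

Definition mget (R : realType) (p q : nat) (A : 'M[R]_(p, q)) (r c : nat) : R :=
  match (insub r : option 'I_p), (insub c : option 'I_q) with
  | Some r', Some c' => A r' c'
  | _, _ => 0
  end.

(* resize a matrix: top-left corner embedding / truncation
   (R^k \subseteq R^n via the first k coordinates) *)
Definition padmx (R : realType) (a b a' b' : nat) (A : 'M[R]_(a, b)) : 'M[R]_(a', b') :=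
  \matrix_(r < a', c < b') mget A r c.
Arguments padmx {R a b a' b'} A.

Definition enorm (R : realType) (k : nat) (v : 'cV[R]_k) : R :=
  Num.sqrt (\sum_(j < k) v j 0 ^+ 2).

Definition radial (R : realType) (h : R -> R) (k : nat) (v : 'cV[R]_k) : 'cV[R]_k :=
  if v == 0 then 0 else (h (enorm v) / enorm v) *: v.

(* Parameter space Param(n) for widths n_0,...,n_L.
   Index i : 'I_L stands for layer i+1: W_{i+1} : n_{i+1} x n_i, b_{i+1} in R^{n_{i+1}} *)
Definition Param (R : realType) (L : nat) (n : nat -> nat) : Type :=
  ((forall i : 'I_L, 'M[R]_(n i.+1, n i)) * (forall i : 'I_L, 'cV[R]_(n i.+1)))%type.

Fixpoint fwd (R : realType) (L : nat) (n : nat -> nat) (h : nat -> R -> R)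
    (p : Param R L n) (x : 'cV[R]_(n 0)) (k : nat) : (k <= L)%N -> 'cV[R]_(n k) :=
  match k return (k <= L)%N -> 'cV[R]_(n k) with
  | 0 => fun _ => x
  | k'.+1 => fun H =>
      radial (h k'.+1) (p.1 (Ordinal H) *m fwd h p x (ltnW H) + p.2 (Ordinal H))
  end.

Definition net (R : realType) (L : nat) (n : nat -> nat) (h : nat -> R -> R)
    (p : Param R L n) (x : 'cV[R]_(n 0)) : 'cV[R]_(n L) :=
  fwd h p x (leqnn L).

Definition loss (R : realType) (L : nat) (n : nat -> nat) (h : nat -> R -> R)
    (N : nat) (xs : 'I_N -> 'cV[R]_(n 0)) (ys : 'I_N -> 'cV[R]_(n L))
    (C : 'cV[R]_(n L) -> 'cV[R]_(n L) -> R) (p : Param R L n) : R :=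
  \sum_(j < N) C (net h p (xs j)) (ys j).

Fixpoint nred_aux (n : nat -> nat) (k : nat) : nat :=
  match k with
  | 0 => n 0
  | k'.+1 => minn (n k'.+1) (nred_aux n k').+1
  end.

Definition nred (L : nat) (n : nat -> nat) (k : nat) : nat :=
  if k == L then n L else nred_aux n k.

(* reduced loss: same network with widths n^red and activations h_i^{(n^red_i)};
   since n^red_0 = n_0 and n^red_L = n_L, inputs/outputs are transported by the
   (here bijective) first-coordinates identification padmx. *)
Definition loss_red (R : realType) (L : nat) (n : nat -> nat) (h : nat -> R -> R)
    (N : nat) (xs : 'I_N -> 'cV[R]_(n 0)) (ys : 'I_N -> 'cV[R]_(n L))
    (C : 'cV[R]_(n L) -> 'cV[R]_(n L) -> R) (p : Param R L (nred L n)) : R :=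
  \sum_(j < N) C (padmx (net h p (padmx (xs j)))) (ys j).

Section ParamOps.
Variables (R : realType) (L : nat) (n : nat -> nat).

Definition padd (p q : Param R L n) : Param R L n :=
  (fun i => p.1 i + q.1 i, fun i => p.2 i + q.2 i).

Definition pscale (a : R) (p : Param R L n) : Param R L n :=
  (fun i => a *: p.1 i, fun i => a *: p.2 i).

Definition psub (p q : Param R L n) : Param R L n :=
  (fun i => p.1 i - q.1 i, fun i => p.2 i - q.2 i).

Definition pdot (p q : Param R L n) : R :=
  \sum_(i < L) ((\sum_(r < n i.+1) \sum_(c < n i) p.1 i r c * q.1 i r c)
               + \sum_(r < n i.+1) p.2 i r 0 * q.2 i r 0).

Definition pnorm (p : Param R L n) : R :=
  \sum_(i < L) ((\sum_(r < n i.+1) \sum_(c < n i) `|p.1 i r c|)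
               + \sum_(r < n i.+1) `|p.2 i r 0|).

Definition pdifferentiable (f : Param R L n -> R) : Prop :=
  forall p : Param R L n, exists G : Param R L n,
    forall eps : R, 0 < eps -> exists2 delta : R, 0 < delta &
      forall v : Param R L n, pnorm v < delta ->
        `|f (padd p v) - f p - pdot G v| <= eps * pnorm v.

Definition updW (p : Param R L n) (i : 'I_L) (r c : nat) (t : R) : Param R L n :=
  (fun j => \matrix_(r', c') (p.1 j r' c' +
      (if (j == i) && ((r' : nat) == r) && ((c' : nat) == c) then t else 0)), p.2).

Definition updb (p : Param R L n) (i : 'I_L) (r : nat) (t : R) : Param R L n :=
  (p.1, fun j => \col_r' (p.2 j r' 0 +
      (if (j == i) && ((r' : nat) == r) then t else 0))).

Definition grad (f : Param R L n -> R) (p : Param R L n) : Param R L n :=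
  (fun i : 'I_L => \matrix_(r, c) derive1 (fun t => f (updW p i r c t)) 0,
   fun i : 'I_L => \col_r derive1 (fun t => f (updb p i r t)) 0).

Definition gd (f : Param R L n -> R) (eta : R) (p : Param R L n) : Param R L n :=
  psub p (pscale eta (grad f p)).

Definition pact (Q : forall k : nat, 'M[R]_(n k)) (p : Param R L n) : Param R L n :=
  (fun i : 'I_L => Q i.+1 *m p.1 i *m invmx (Q i), fun i : 'I_L => Q i.+1 *m p.2 i).

Definition Qinv (Q : forall k : nat, 'M[R]_(n k)) : forall k : nat, 'M[R]_(n k) :=
  fun k => invmx (Q k).

Definition pproj (p : Param R L n) : Param R L n :=
  (fun i : 'I_L => \matrix_(r, c)
      (if (nred L n i.+1 <= r)%N && (c < nred L n i)%N then 0 else p.1 i r c),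
   fun i : 'I_L => \col_r (if (nred L n i.+1 <= r)%N then 0 else p.2 i r 0)).

Definition gdproj (f : Param R L n -> R) (eta : R) (p : Param R L n) : Param R L n :=
  pproj (gd f eta p).

Definition piota (p : Param R L (nred L n)) : Param R L n :=
  (fun i : 'I_L => padmx (p.1 i), fun i : 'I_L => padmx (p.2 i)).

(* QR compression algorithm (specification of its possible outputs)   *)

Definition Inc (a b : nat) : 'M[R]_(a, b) := \matrix_(r, c) ((r : nat) == c)%:R.

Definition upper_tri (a b : nat) (A : 'M[R]_(a, b)) : Prop :=
  forall (r : 'I_a) (c : 'I_b), (c < r)%N -> A r c = 0.

Definition orthogonal (k : nat) (Q : 'M[R]_k) : Prop := Q *m Q^T = 1%:M.

(* A_{i+1} = [ b_{i+1}  W_{i+1} Q_i Inc_i ]  (for i = 0 this is [b_1 W_1],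
   since Q_0 = id and Inc_0 = id as n^red_0 = n_0) *)
Definition QR_A (p : Param R L n) (Q : forall k : nat, 'M[R]_(n k)) (i : 'I_L)
  : 'M[R]_(n i.+1, 1 + nred L n i) :=
  row_mx (p.2 i) (p.1 i *m Q i *m Inc (n i) (nred L n i)).

Definition QR_output (p : Param R L n) (Q : forall k : nat, 'M[R]_(n k))
    (pr : Param R L (nred L n)) : Prop :=
  [/\ Q 0 = 1%:M, Q L = 1%:M,
      (forall k, (0 < k < L)%N -> orthogonal (Q k)) &
      forall i : 'I_L,
        if (i.+1 < L)%N then
          upper_tri (row_mx (pr.2 i) (pr.1 i)) /\
          QR_A p Q i = Q i.+1 *m Inc (n i.+1) (nred L n i.+1) *m row_mx (pr.2 i) (pr.1 i)
        else row_mx (pr.2 i) (pr.1 i) = padmx (QR_A p Q i)].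

End ParamOps.
Arguments piota {R L n} p.

(** Orthogonal matrices commute with radial rescalings, which only see the
    norm, so the loss is invariant under the action of [Q]; the action is
    also an isometry of the inner product on parameters, hence the gradient
    of a differentiable invariant function is equivariant and so is a
    gradient step.  For the second identity consider parameters
    [iota V + U] where [U] vanishes on all biases and on the first
    [n^red_(i-1)] columns of each weight matrix.  As long as the bottom-left
    blocks vanish, every activation of layer [i] vanishes below coordinate
    [n^red_i], so the network computes the reduced network of [V]: the loss
    has the reduced gradient on the kept block and zero partial derivatives
    on the columns carrying [U], while the projection discards the remaining
    block.  Thus one projected step maps [iota V + U] to
    [iota (gamma_red V) + U], and the QR decomposition puts
    [Q^-1 . (W, b)] in this form with [V = (W^red, b^red)]. *)

From HB Require Import structures.
From mathcomp Require Import all_boot all_order all_algebra.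
From mathcomp Require Import all_classical all_reals all_analysis.
From mathcomp Require Import ring lra.
Import Order.TTheory GRing.Theory Num.Theory.
Local Open Scope ring_scope.

Set Implicit Arguments.
Unset Strict Implicit.
Unset Printing Implicit Defensive.

Section Padding.
Variable R : realType.

Lemma mgetE p q (A : 'M[R]_(p, q)) r c (Hr : (r < p)%N) (Hc : (c < q)%N) :
  mget A r c = A (Ordinal Hr) (Ordinal Hc).
Proof. by rewrite /mget (insubT (fun x => (x < p)%N) Hr) (insubT (fun x => (x < q)%N) Hc). Qed.

Lemma mget_ord p q (A : 'M[R]_(p, q)) (r : 'I_p) (c : 'I_q) : mget A r c = A r c.
Proof. by rewrite (mgetE A (ltn_ord r) (ltn_ord c)); congr (A _ _); apply: val_inj. Qed.

Lemma mget_ord0 p (v : 'cV[R]_p) (r : 'I_p) : mget v r 0%N = v r 0.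
Proof. by rewrite (mgetE v (ltn_ord r) (isT : (0 < 1)%N)); congr (v _ _); apply: val_inj. Qed.

Lemma mget_col p (v : 'cV[R]_p) r (Hr : (r < p)%N) : mget v r 0%N = v (Ordinal Hr) 0.
Proof. exact: (mget_ord0 v (Ordinal Hr)). Qed.

Lemma mget_outr p q (A : 'M[R]_(p, q)) r c : (p <= r)%N -> mget A r c = 0.
Proof. by move=> le_pr; rewrite /mget insubF // ltnNge le_pr. Qed.

Lemma mget_outc p q (A : 'M[R]_(p, q)) r c : (q <= c)%N -> mget A r c = 0.
Proof. by move=> le_qc; rewrite /mget; case: (insub r) => // r'; rewrite insubF // ltnNge le_qc. Qed.

Lemma mget0 p q r c : mget (0 : 'M[R]_(p, q)) r c = 0.
Proof.
case: (ltnP r p) => [Hr|]; last exact: mget_outr.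
case: (ltnP c q) => [Hc|]; last exact: mget_outc.
by rewrite (mgetE _ Hr Hc) mxE.
Qed.

Lemma mgetD p q (A B : 'M[R]_(p, q)) r c : mget (A + B) r c = mget A r c + mget B r c.
Proof.
case: (ltnP r p) => [Hr|le]; last by rewrite !mget_outr // addr0.
case: (ltnP c q) => [Hc|le]; last by rewrite !mget_outc // addr0.
by rewrite !(mgetE _ Hr Hc) mxE.
Qed.

Lemma mgetZ p q a (A : 'M[R]_(p, q)) r c : mget (a *: A) r c = a * mget A r c.
Proof.
case: (ltnP r p) => [Hr|le]; last by rewrite !mget_outr // mulr0.
case: (ltnP c q) => [Hc|le]; last by rewrite !mget_outc // mulr0.
by rewrite !(mgetE _ Hr Hc) mxE.
Qed.

Lemma mgetB p q (A B : 'M[R]_(p, q)) r c : mget (A - B) r c = mget A r c - mget B r c.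
Proof.
case: (ltnP r p) => [Hr|le]; last by rewrite !mget_outr // subr0.
case: (ltnP c q) => [Hc|le]; last by rewrite !mget_outc // subr0.
by rewrite !(mgetE _ Hr Hc) !mxE.
Qed.

Lemma mget_row_mxl p q1 q2 (A : 'M[R]_(p, q1)) (B : 'M[R]_(p, q2)) r c :
  (c < q1)%N -> mget (row_mx A B) r c = mget A r c.
Proof.
move=> Hc; case: (ltnP r p) => Hr; last by rewrite !mget_outr.
have Hc' : (c < q1 + q2)%N by apply: leq_trans (leq_addr _ _).
rewrite (mgetE _ Hr Hc') (mgetE _ Hr Hc).
by rewrite (_ : Ordinal Hc' = lshift q2 (Ordinal Hc)) ?row_mxEl //; apply: val_inj.
Qed.

Lemma mget_row_mxr p q1 q2 (A : 'M[R]_(p, q1)) (B : 'M[R]_(p, q2)) r c :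
  mget (row_mx A B) r (q1 + c) = mget B r c.
Proof.
case: (ltnP r p) => Hr; last by rewrite !mget_outr.
case: (ltnP c q2) => Hc; last by rewrite !mget_outc // leq_add2l.
have Hc' : (q1 + c < q1 + q2)%N by rewrite ltn_add2l.
rewrite (mgetE _ Hr Hc') (mgetE _ Hr Hc).
by rewrite (_ : Ordinal Hc' = rshift q1 (Ordinal Hc)) ?row_mxEr //; apply: val_inj.
Qed.

Lemma mget_padmx a b a' b' (A : 'M[R]_(a, b)) r c :
  (r < a')%N -> (c < b')%N -> mget (padmx A : 'M[R]_(a', b')) r c = mget A r c.
Proof. by move=> Hr Hc; rewrite (mgetE _ Hr Hc) mxE. Qed.

Lemma padmxD a b a' b' (A B : 'M[R]_(a, b)) :
  (padmx (A + B) : 'M[R]_(a', b')) = padmx A + padmx B.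
Proof. by apply/matrixP => r c; rewrite !mxE mgetD. Qed.

Lemma padmxK a b a' b' (A : 'M[R]_(a, b)) :
  (a <= a')%N -> (b <= b')%N -> padmx (padmx A : 'M[R]_(a', b')) = A.
Proof.
move=> le_a le_b; apply/matrixP => r c; rewrite mxE mget_padmx ?mget_ord //.
  exact: leq_trans (ltn_ord r) le_a.
exact: leq_trans (ltn_ord c) le_b.
Qed.

Lemma padmx_row_mx a a' b1 b2 (A : 'M[R]_(a, b1)) (B : 'M[R]_(a, b2)) :
  (padmx (row_mx A B) : 'M[R]_(a', b1 + b2)) = row_mx (padmx A) (padmx B).
Proof.
apply/matrixP => r c; rewrite mxE -(splitK c); case: (fintype.split c) => j /=.
  by rewrite row_mxEl mxE mget_row_mxl.
by rewrite row_mxEr mxE mget_row_mxr.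
Qed.

Lemma big_ord_widen_out m m' (F : nat -> R) :
  (m <= m')%N -> (forall c, (m <= c)%N -> F c = 0) ->
  \sum_(c < m') F c = \sum_(c < m) F c.
Proof.
move=> le F0; rewrite (big_ord_widen m' F le) [RHS]big_mkcond /=.
by apply: eq_bigr => c _; case: ifP => // /negbT; rewrite -leqNgt => /F0 ->.
Qed.

Lemma mulmx_padmx a m b a' m' b' (A : 'M[R]_(a, m)) (B : 'M[R]_(m, b)) :
  (m <= m')%N ->
  (padmx A : 'M[R]_(a', m')) *m (padmx B : 'M[R]_(m', b')) = padmx (A *m B).
Proof.
move=> le; apply/matrixP => r s; rewrite !mxE.
under eq_bigr => c _ do rewrite !mxE.
rewrite (@big_ord_widen_out m m' (fun c => mget A r c * mget B c s)) //; last first.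
  by move=> c Hc; rewrite mget_outc // mul0r.
case: (ltnP r a) => Hr; last by rewrite mget_outr // big1 // => c _; rewrite mget_outr // mul0r.
case: (ltnP s b) => Hs; last by rewrite mget_outc // big1 // => c _; rewrite (mget_outc B) // mulr0.
rewrite (mgetE _ Hr Hs) mxE; apply: eq_bigr => c _.
by rewrite (mgetE _ Hr (ltn_ord c)) (mgetE _ (ltn_ord c) Hs); congr (A _ _ * B _ _); apply: val_inj.
Qed.

Lemma mulmx_padmx0 a m m' (M : 'M[R]_(a, m')) (v : 'cV[R]_m) :
  (forall r (c : 'I_m'), (c < m)%N -> M r c = 0) -> M *m (padmx v : 'cV[R]_m') = 0.
Proof.
move=> M0; apply/matrixP => r s; rewrite !mxE; apply: big1 => c _.
case: (ltnP c m) => Hc; first by rewrite M0 // mul0r.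
by rewrite mxE mget_outr // mulr0.
Qed.

Lemma Inc_mulmx a b m (X : 'M[R]_(b, m)) : Inc R a b *m X = padmx X.
Proof.
apply/matrixP => r s; rewrite !mxE.
case: (ltnP r b) => Hr.
  rewrite (bigD1 (Ordinal Hr)) //= big1 => [|c /negbTE Hc]; last first.
    rewrite mxE; case: eqP => [E|]; last by rewrite mul0r.
    by move: Hc; rewrite -(inj_eq val_inj) /= E eqxx.
  by rewrite mxE eqxx mul1r addr0 (mgetE _ Hr (ltn_ord s)); congr (X _ _); apply: val_inj.
rewrite mget_outr // big1 // => c _; rewrite mxE; case: eqP => [E|]; last by rewrite mul0r.
by move: (ltn_ord c); rewrite -E ltnNge Hr.
Qed.

Lemma mulmx_Inc a m b (X : 'M[R]_(a, m)) : X *m Inc R m b = padmx X.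
Proof.
apply/matrixP => r s; rewrite !mxE.
case: (ltnP s m) => Hs.
  rewrite (bigD1 (Ordinal Hs)) //= big1 => [|c /negbTE Hc]; last first.
    rewrite mxE; case: eqP => [E|]; last by rewrite mulr0.
    by move: Hc; rewrite -(inj_eq val_inj) /= E eqxx.
  by rewrite mxE eqxx mulr1 addr0 (mgetE _ (ltn_ord r) Hs); congr (X _ _); apply: val_inj.
rewrite mget_outc // big1 // => c _; rewrite mxE; case: eqP => [E|]; last by rewrite mulr0.
by move: (ltn_ord c); rewrite E ltnNge Hs.
Qed.

End Padding.

Section Radial.
Variable R : realType.

Lemma sum_sqr_col k (v : 'cV[R]_k) : \sum_(j < k) v j 0 ^+ 2 = (v^T *m v) 0 0.
Proof. by rewrite mxE; apply: eq_bigr => j _; rewrite mxE expr2. Qed.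

Lemma orthogonal_unitmx k (Q : 'M[R]_k) : Q *m Q^T = 1%:M -> Q \in unitmx.
Proof. by case/mulmx1_unit. Qed.

Lemma orthogonal_invmx k (Q : 'M[R]_k) : Q *m Q^T = 1%:M -> invmx Q = Q^T.
Proof.
move=> Q_orth; rewrite -[invmx Q]mulmx1 -Q_orth mulmxA mulVmx ?mul1mx //.
exact: orthogonal_unitmx.
Qed.

Lemma enorm_orthogonal k (Q : 'M[R]_k) (v : 'cV[R]_k) :
  Q *m Q^T = 1%:M -> enorm (Q *m v) = enorm v.
Proof.
by move=> Q_orth; rewrite /enorm !sum_sqr_col trmx_mul -mulmxA (mulmxA Q^T) (mulmx1C Q_orth) mul1mx.
Qed.

Lemma radial_orthogonal k (f : R -> R) (Q : 'M[R]_k) (v : 'cV[R]_k) :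
  Q *m Q^T = 1%:M -> radial f (Q *m v) = Q *m radial f v.
Proof.
move=> Q_orth; rewrite /radial enorm_orthogonal //.
have -> : (Q *m v == 0) = (v == 0).
  apply/eqP/eqP => [Qv0|->]; last by rewrite mulmx0.
  by rewrite -(mul1mx v) -(mulmx1C Q_orth) -mulmxA Qv0 mulmx0.
by case: eqP => _; rewrite ?mulmx0 // scalemxAr.
Qed.

Lemma enorm_padmx a b (v : 'cV[R]_a) : (a <= b)%N -> enorm (padmx v : 'cV[R]_b) = enorm v.
Proof.
move=> le; rewrite /enorm; congr Num.sqrt.
under eq_bigr => j _ do rewrite mxE.
rewrite (@big_ord_widen_out _ a b (fun j => mget v j 0 ^+ 2)) //; last first.
  by move=> c Hc; rewrite mget_outr // expr0n.
by apply: eq_bigr => j _; rewrite mget_ord0.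
Qed.

Lemma padmx_eq0 a b (v : 'cV[R]_a) : (a <= b)%N -> ((padmx v : 'cV[R]_b) == 0) = (v == 0).
Proof.
move=> le; apply/eqP/eqP => [v0|->]; last by apply/matrixP => r c; rewrite !mxE mget0.
apply/matrixP => r c; rewrite ord1 mxE.
have Hr : (r < b)%N by apply: leq_trans le.
by have := congr1 (fun M : 'cV_b => M (Ordinal Hr) 0) v0; rewrite !mxE /= mget_ord0.
Qed.

Lemma radial_padmx a b (f : R -> R) (v : 'cV[R]_a) : (a <= b)%N ->
  radial f (padmx v : 'cV[R]_b) = padmx (radial f v).
Proof.
move=> le; rewrite /radial padmx_eq0 // enorm_padmx //.
by case: eqP => _; apply/matrixP => r c; rewrite !mxE ?mget0 ?mgetZ.
Qed.

Lemma radial_coord0 k (f : R -> R) (v : 'cV[R]_k) r : v r 0 = 0 -> radial f v r 0 = 0.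
Proof. by move=> v0; rewrite /radial; case: eqP => _; rewrite !mxE ?v0 ?mulr0. Qed.

End Radial.

Lemma derive1_0_approx (R : realType) (g : R -> R) (a : R) :
  (forall eps, 0 < eps -> exists2 d, 0 < d &
     forall t, `|t| < d -> `|g t - g 0 - t * a| <= eps * `|t|) ->
  derive1 g 0 = a.
Proof.
move=> approx; rewrite /derive1; apply: cvg_lim => //.
apply/cvgrPdist_le => e e0.
have [d d0 Hd] := approx e e0.
exists d => // t /= td tn0; rewrite addr0.
have -> : a - t^-1 *: (g t - g 0) = - (t^-1 * (g t - g 0 - t * a)).
  by rewrite /GRing.scale /=; field.
rewrite normrN normrM normrV ?unitfE // ler_pdivrMl ?normr_gt0 // [X in _ <= X]mulrC.
by apply: Hd; rewrite sub0r normrN in td.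
Qed.

Section ParamSpace.
Variables (R : realType) (L : nat) (n : nat -> nat).
Notation P := (Param R L n).

Lemma param_ext (p q : P) :
  (forall i r c, p.1 i r c = q.1 i r c) -> (forall i r, p.2 i r 0 = q.2 i r 0) -> p = q.
Proof.
case: p q => [p1 p2] [q1 q2] /= eq1 eq2; congr pair;
  apply: functional_extensionality_dep => i; apply/matrixP => r c; first exact: eq1.
by rewrite ord1; exact: eq2.
Qed.

Lemma pnorm_ge0 (v : P) : 0 <= pnorm v.
Proof.
by apply: sumr_ge0 => i _; apply: addr_ge0; apply: sumr_ge0 => r _; try apply: sumr_ge0.
Qed.

Lemma pnormZ t (v : P) : pnorm (pscale t v) = `|t| * pnorm v.
Proof.
rewrite /pnorm mulr_sumr; apply: eq_bigr => i _; rewrite mulrDr !mulr_sumr.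
congr (_ + _); apply: eq_bigr => r _; rewrite ?mulr_sumr.
  by apply: eq_bigr => c _; rewrite mxE normrM.
by rewrite mxE normrM.
Qed.

Lemma pdotZr t (G v : P) : pdot G (pscale t v) = t * pdot G v.
Proof.
rewrite /pdot mulr_sumr; apply: eq_bigr => i _; rewrite mulrDr !mulr_sumr.
congr (_ + _); apply: eq_bigr => r _; rewrite ?mulr_sumr.
  by apply: eq_bigr => c _; rewrite mxE mulrCA.
by rewrite mxE mulrCA.
Qed.

Lemma padd_pscale0 (q v : P) : padd q (pscale 0 v) = q.
Proof. by apply: param_ext => *; rewrite !mxE mul0r addr0. Qed.

(* [pdifferentiable f] unfolds to [forall q, exists G, is_pgrad f q G]. *)
Definition is_pgrad (f : P -> R) (q G : P) : Prop :=
  forall eps : R, 0 < eps -> exists2 delta : R, 0 < delta &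
    forall v : P, pnorm v < delta -> `|f (padd q v) - f q - pdot G v| <= eps * pnorm v.

Lemma derive1_pgrad f q G v : is_pgrad f q G ->
  derive1 (fun t => f (padd q (pscale t v))) 0 = pdot G v.
Proof.
move=> HG; apply: derive1_0_approx => eps eps0.
set M := pnorm v + 1.
have M0 : 0 < M by rewrite /M; have := pnorm_ge0 v; lra.
have [d d0 Hd] := HG (eps / M) (divr_gt0 eps0 M0).
exists (d / M) => [|t td]; first exact: divr_gt0.
rewrite padd_pscale0 -pdotZr.
have small : pnorm (pscale t v) < d.
  rewrite pnormZ; apply: (@le_lt_trans _ _ (`|t| * M)); last by rewrite -ltr_pdivlMr.
  by rewrite ler_wpM2l // /M lerDl.
apply: (le_trans (Hd _ small)); rewrite pnormZ.
have vM : pnorm v / M <= 1 by rewrite ler_pdivrMr // mul1r /M lerDl.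
rewrite (_ : eps / M * _ = (eps * `|t|) * (pnorm v / M)); last by ring.
by apply: ler_piMr => //; apply: mulr_ge0 => //; exact: ltW.
Qed.

Definition pbasisW (i : 'I_L) (r c : nat) : P :=
  (fun j => \matrix_(r', c') (if (j == i) && ((r' : nat) == r) && ((c' : nat) == c) then 1 else 0),
   fun j => 0).

Definition pbasisb (i : 'I_L) (r : nat) : P :=
  (fun j => 0, fun j => \col_r' (if (j == i) && ((r' : nat) == r) then 1 else 0)).

Lemma updW_pbasis (q : P) i r c t : updW q i r c t = padd q (pscale t (pbasisW i r c)).
Proof.
apply: param_ext => [j r' c'|j r'] /=; rewrite !mxE; last by rewrite mulr0 addr0.
by case: ifP; rewrite ?mulr1 ?mulr0.
Qed.

Lemma updb_pbasis (q : P) i r t : updb q i r t = padd q (pscale t (pbasisb i r)).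
Proof.
apply: param_ext => [j r' c'|j r'] /=; rewrite !mxE; first by rewrite mulr0 addr0.
by case: ifP; rewrite ?mulr1 ?mulr0.
Qed.

Lemma pdot_pbasisW (G : P) (i : 'I_L) (r : 'I_(n i.+1)) (c : 'I_(n i)) : pdot G (pbasisW i r c) = G.1 i r c.
Proof.
rewrite /pdot (bigD1 i) //= [X in _ + X]big1 => [|j /negbTE ji]; last first.
  rewrite [X in _ + X]big1 ?addr0 => [|r' _]; last by rewrite mxE mulr0.
  by apply: big1 => r' _; apply: big1 => c' _; rewrite mxE ji mulr0.
rewrite addr0 [X in _ + X]big1 ?addr0 => [|r' _]; last by rewrite mxE mulr0.
rewrite (bigD1 r) //= [X in _ + X]big1 => [|r' /negbTE rr]; last first.
  by apply: big1 => c' _; rewrite mxE eqxx /= val_eqE rr mulr0.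
rewrite addr0 (bigD1 c) //= [X in _ + X]big1 => [|c' /negbTE cc]; last first.
  by rewrite mxE eqxx /= eqxx val_eqE cc mulr0.
by rewrite addr0 mxE !eqxx mulr1.
Qed.

Lemma pdot_pbasisb (G : P) (i : 'I_L) (r : 'I_(n i.+1)) : pdot G (pbasisb i r) = G.2 i r 0.
Proof.
rewrite /pdot (bigD1 i) //= [X in _ + X]big1 => [|j /negbTE ji]; last first.
  rewrite [X in _ + X]big1 ?addr0 => [|r' _]; last by rewrite mxE ji mulr0.
  by apply: big1 => r' _; apply: big1 => c' _; rewrite mxE mulr0.
rewrite addr0 [X in X + _]big1 ?add0r => [|r' _]; last by apply: big1 => c' _; rewrite mxE mulr0.
rewrite (bigD1 r) //= [X in _ + X]big1 => [|r' /negbTE rr]; last by rewrite mxE eqxx /= val_eqE rr mulr0.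
by rewrite addr0 mxE !eqxx mulr1.
Qed.

Lemma grad_pgrad f q G : is_pgrad f q G -> grad f q = G.
Proof.
move=> HG; apply: param_ext => [i r c|i r]; rewrite mxE.
  under eq_fun => t do rewrite updW_pbasis.
  by rewrite (derive1_pgrad _ HG) pdot_pbasisW.
under eq_fun => t do rewrite updb_pbasis.
by rewrite (derive1_pgrad _ HG) pdot_pbasisb.
Qed.

End ParamSpace.

Section Frobenius.
Variable R : realType.

Lemma frobenius_mxtrace a b (A B : 'M[R]_(a, b)) :
  \sum_(r < a) \sum_(c < b) A r c * B r c = \tr (A *m B^T).
Proof. by apply: eq_bigr => r _; rewrite !mxE; apply: eq_bigr => c _; rewrite mxE. Qed.

Lemma frobenius_mxtrace_col a (u v : 'cV[R]_a) : \sum_(r < a) u r 0 * v r 0 = \tr (u *m v^T).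
Proof. by rewrite -frobenius_mxtrace; apply: eq_bigr => r _; rewrite big_ord1. Qed.

Lemma mxtrace_adjoint a b (A : 'M[R]_a) (B : 'M[R]_b) (X E : 'M[R]_(a, b)) :
  \tr (X *m (A^T *m E *m B)^T) = \tr ((A *m X *m B^T) *m E^T).
Proof. by rewrite !trmx_mul trmxK !mulmxA mxtrace_mulC !mulmxA. Qed.

End Frobenius.

Section Equivariance.
Variables (R : realType) (L : nat) (n : nat -> nat) (h : nat -> R -> R).
Notation P := (Param R L n).
Variable Q : forall k : nat, 'M[R]_(n k).
Hypothesis Q_orth : forall k, (k <= L)%N -> Q k *m (Q k)^T = 1%:M.
Hypothesis Q0 : Q 0 = 1%:M.
Hypothesis QL : Q L = 1%:M.

Let Q_unit k : (k <= L)%N -> Q k \in unitmx.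
Proof. by move=> le_kL; exact: orthogonal_unitmx (Q_orth le_kL). Qed.

Lemma pactK (q : P) : pact Q (pact (Qinv Q) q) = q.
Proof.
have Qi_unit (i : 'I_L) : Q i \in unitmx /\ Q i.+1 \in unitmx.
  by split; apply: Q_unit; [exact: ltnW | exact: ltn_ord].
apply: param_ext => [i r c|i r]; rewrite /pact /Qinv /=; have [u0 u1] := Qi_unit i.
  by rewrite invmxK !mulmxA mulmxV // mul1mx -mulmxA mulmxV // mulmx1.
by rewrite mulmxA mulmxV // mul1mx.
Qed.

Lemma pactD (a b : P) : pact Q (padd a b) = padd (pact Q a) (pact Q b).
Proof. by apply: param_ext => [i r c|i r]; rewrite /pact /padd /= ?mulmxDr ?mulmxDl. Qed.

Lemma pactZ t (a : P) : pact Q (pscale t a) = pscale t (pact Q a).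
Proof. by apply: param_ext => [i r c|i r]; rewrite /pact /pscale /= -scalemxAr // -scalemxAl. Qed.

Lemma pactB (a b : P) : pact Q (psub a b) = psub (pact Q a) (pact Q b).
Proof. by apply: param_ext => [i r c|i r]; rewrite /pact /psub /= ?mulmxBr ?mulmxBl. Qed.

Lemma fwd_pact (q : P) x k (le_kL : (k <= L)%N) :
  fwd h (pact Q q) x le_kL = Q k *m fwd h q x le_kL.
Proof.
elim: k le_kL => [|k IH] le_kL /=; first by rewrite Q0 mul1mx.
rewrite IH /= -!mulmxA (mulmxA (invmx (Q k))) mulVmx ?Q_unit ?(ltnW le_kL) // mul1mx.
by rewrite -mulmxDr radial_orthogonal // Q_orth.
Qed.

Lemma loss_pact N (xs : 'I_N -> 'cV[R]_(n 0)) (ys : 'I_N -> 'cV[R]_(n L))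
    (C : 'cV[R]_(n L) -> 'cV[R]_(n L) -> R) (q : P) :
  loss h xs ys C (pact Q q) = loss h xs ys C q.
Proof. by apply: eq_bigr => j _; rewrite /net fwd_pact QL mul1mx. Qed.

Lemma pdot_pact (X E : P) : pdot X (pact (Qinv Q) E) = pdot (pact Q X) E.
Proof.
apply: eq_bigr => i _; rewrite /pact /Qinv /=.
have Q1_orth := Q_orth (ltn_ord i); have Q0_orth := Q_orth (ltnW (ltn_ord i)).
rewrite !frobenius_mxtrace !frobenius_mxtrace_col invmxK !orthogonal_invmx //.
congr (_ + _); first by rewrite mxtrace_adjoint.
by rewrite -[_^T *m E.2 i]mulmx1 -[Q i.+1 *m X.2 i]mulmx1 -{2}(trmx1 R) mxtrace_adjoint.
Qed.

Lemma grad_pact (f : P -> R) : pdifferentiable f -> (forall q, f (pact Q q) = f q) ->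
  forall q, grad f (pact Q q) = pact Q (grad f q).
Proof.
move=> f_diff f_inv q; have [G HG] := f_diff q.
have shift v t : f (padd (pact Q q) (pscale t v)) = f (padd q (pscale t (pact (Qinv Q) v))).
  by rewrite -[RHS]f_inv pactD pactZ pactK.
rewrite (grad_pgrad HG); apply: param_ext => [i r c|i r]; rewrite mxE.
  under eq_fun => t do rewrite updW_pbasis shift.
  by rewrite (derive1_pgrad _ HG) pdot_pact pdot_pbasisW.
under eq_fun => t do rewrite updb_pbasis shift.
by rewrite (derive1_pgrad _ HG) pdot_pact pdot_pbasisb.
Qed.

Lemma gd_pact (f : P -> R) eta : pdifferentiable f -> (forall q, f (pact Q q) = f q) ->
  forall q, gd f eta (pact Q q) = pact Q (gd f eta q).
Proof. by move=> f_diff f_inv q; rewrite /gd grad_pact // pactB pactZ. Qed.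

End Equivariance.

Section Reduction.
Variables (R : realType) (L : nat) (n : nat -> nat) (h : nat -> R -> R).
Notation P := (Param R L n).
Notation Pr := (Param R L (nred L n)).
Notation nr := (nred L n).

Lemma nred_le k : (nr k <= n k)%N.
Proof. by rewrite /nred; case: eqP => [->|_] //; case: k => [|k] //=; exact: geq_minl. Qed.

Lemma nred0 : nr 0 = n 0.
Proof. by rewrite /nred; case: eqP => // <-. Qed.

(* The parameters fixed by [pproj]. *)
Definition red_supported (q : P) : Prop :=
  (forall (i : 'I_L) (r : 'I_(n i.+1)) (c : 'I_(n i)),
      (nr i.+1 <= r)%N -> (c < nr i)%N -> q.1 i r c = 0)
  /\ (forall (i : 'I_L) (r : 'I_(n i.+1)), (nr i.+1 <= r)%N -> q.2 i r 0 = 0).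

Definition red_residual (U : P) : Prop :=
  (forall (i : 'I_L) (r : 'I_(n i.+1)) (c : 'I_(n i)), (c < nr i)%N -> U.1 i r c = 0)
  /\ (forall (i : 'I_L) (r : 'I_(n i.+1)), U.2 i r 0 = 0).

Lemma red_supported_iota (V : Pr) (U : P) : red_residual U -> red_supported (padd (piota V) U).
Proof.
by case=> [U1 U2]; split => [i r c Hr Hc|i r Hr] /=; rewrite !mxE mget_outr // add0r ?U1 ?U2.
Qed.

Lemma fwd_red_supported (q : P) x k (le_kL : (k <= L)%N) (r : 'I_(n k)) :
  red_supported q -> (nr k <= r)%N -> fwd h q x le_kL r 0 = 0.
Proof.
case=> [S1 S2]; elim: k le_kL r => [|k IH] le_kL r Hr /=.
  by move: Hr; rewrite nred0 leqNgt ltn_ord.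
apply: radial_coord0; rewrite !mxE (S2 (Ordinal le_kL)) // addr0.
apply: big1 => c _; case: (ltnP c (nr k)) => Hc; first by rewrite (S1 (Ordinal le_kL)) // mul0r.
by rewrite IH // mulr0.
Qed.

Lemma fwd_updW_out (q : P) (i : 'I_L) r c t x k (le_kL : (k <= L)%N) :
  red_supported q -> (nr i <= c)%N -> fwd h (updW q i r c t) x le_kL = fwd h q x le_kL.
Proof.
move=> S Hc; elim: k le_kL => [|k IH] le_kL //=.
rewrite IH; congr (radial _ (_ + _)).
apply/matrixP => r' s; rewrite !mxE; apply: eq_bigr => c' _; rewrite mxE.
case: ifP => [/andP[/andP[/eqP ji _] /eqP cc] | _]; last by rewrite addr0.
by rewrite ord1 fwd_red_supported ?mulr0 ?addr0 // cc; move: Hc; rewrite -ji.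
Qed.

Lemma fwd_iota (V : Pr) (U : P) x k (le_kL : (k <= L)%N) :
  red_residual U -> fwd h (padd (piota V) U) x le_kL = padmx (fwd h V (padmx x) le_kL).
Proof.
case=> [U1 U2]; elim: k le_kL => [|k IH] le_kL /=.
  apply/matrixP => r s; rewrite ord1 !mxE.
  have Hr : (r < nr 0)%N by rewrite nred0.
  by rewrite (mget_col _ Hr) mxE /= mget_ord0.
rewrite IH -radial_padmx ?nred_le //; congr radial.
rewrite mulmxDl (@mulmx_padmx0 _ _ _ _ (U.1 (Ordinal le_kL))) ?addr0; last first.
  by move=> r c Hc; exact: (U1 (Ordinal le_kL) r c Hc).
have -> : U.2 (Ordinal le_kL) = 0 by apply/matrixP => r s; rewrite ord1 U2 mxE.
by rewrite addr0 mulmx_padmx ?nred_le // padmxD.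
Qed.

Variables (N : nat) (xs : 'I_N -> 'cV[R]_(n 0)) (ys : 'I_N -> 'cV[R]_(n L)).
Variable C : 'cV[R]_(n L) -> 'cV[R]_(n L) -> R.

Lemma loss_updW_out (q : P) (i : 'I_L) r c t :
  red_supported q -> (nr i <= c)%N -> loss h xs ys C (updW q i r c t) = loss h xs ys C q.
Proof. by move=> S Hc; apply: eq_bigr => j _; rewrite /net fwd_updW_out. Qed.

Lemma loss_iota (V : Pr) (U : P) :
  red_residual U -> loss h xs ys C (padd (piota V) U) = loss_red h xs ys C V.
Proof. by move=> HU; apply: eq_bigr => j _; rewrite /net fwd_iota. Qed.

Lemma updW_iota (V : Pr) (U : P) (i : 'I_L) r c t :
  (r < nr i.+1)%N -> (c < nr i)%N ->
  updW (padd (piota V) U) i r c t = padd (piota (updW V i r c t)) U.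
Proof.
move=> Hri Hci; apply: param_ext => [j r' c'|j r'] /=; rewrite !mxE //.
case: ifP => [/andP[/andP[/eqP ji /eqP rr] /eqP cc]|F]; last first.
  case: (ltnP r' (nr j.+1)) => Hr'; last by rewrite !mget_outr ?addr0.
  case: (ltnP c' (nr j)) => Hc'; last by rewrite !mget_outc ?addr0.
  by rewrite !(mgetE _ Hr' Hc') mxE /= F !addr0.
subst; by rewrite !(mgetE _ Hri Hci) mxE /= !eqxx addrAC.
Qed.

Lemma updb_iota (V : Pr) (U : P) (i : 'I_L) r t :
  (r < nr i.+1)%N -> updb (padd (piota V) U) i r t = padd (piota (updb V i r t)) U.
Proof.
move=> Hri; apply: param_ext => [j r' c'|j r'] /=; rewrite !mxE //.
case: ifP => [/andP[/eqP ji /eqP rr]|F]; last first.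
  case: (ltnP r' (nr j.+1)) => Hr'; last by rewrite !mget_outr ?addr0.
  by rewrite !(mget_col _ Hr') mxE /= F !addr0.
subst; by rewrite !(mget_col _ Hri) mxE /= !eqxx addrAC.
Qed.

Lemma gdproj_iota eta (V : Pr) (U : P) : red_residual U ->
  gdproj (loss h xs ys C) eta (padd (piota V) U)
  = padd (piota (gd (loss_red h xs ys C) eta V)) U.
Proof.
move=> HU; have [U1 U2] := HU; set q := padd (piota V) U.
have dW_kept (i : 'I_L) (r c : nat) : (r < nr i.+1)%N -> (c < nr i)%N ->
    (fun t => loss h xs ys C (updW q i r c t)) = (fun t => loss_red h xs ys C (updW V i r c t)).
  by move=> Hr Hc; apply: funext => t; rewrite /q updW_iota // loss_iota.
have dW_out (i : 'I_L) (r c : nat) : (nr i <= c)%N ->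
    (fun t => loss h xs ys C (updW q i r c t)) = cst (loss h xs ys C q).
  by move=> Hc; apply: funext => t; rewrite loss_updW_out //; exact: red_supported_iota.
have db_kept (i : 'I_L) (r : nat) : (r < nr i.+1)%N ->
    (fun t => loss h xs ys C (updb q i r t)) = (fun t => loss_red h xs ys C (updb V i r t)).
  by move=> Hr; apply: funext => t; rewrite /q updb_iota // loss_iota.
apply: param_ext => [i r c|i r]; rewrite /gdproj /pproj /gd /psub /pscale /grad /= !mxE.
  case: (ltnP c (nr i)) => Hc; last first.
    by rewrite andbF dW_out // derive1_cst mulr0 subr0 !mget_outc // add0r.
  case: (ltnP r (nr i.+1)) => Hr; last by rewrite /= mget_outr // add0r U1.
  by rewrite /= U1 // dW_kept // mgetB mgetZ !(mgetE _ Hr Hc) mxE /= !addr0.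
case: (ltnP r (nr i.+1)) => Hr; last by rewrite /= mget_outr // add0r U2.
by rewrite /= U2 db_kept // mgetB mgetZ !(mget_col _ Hr) mxE /= !addr0.
Qed.

End Reduction.

Section QRCompression.
Variables (R : realType) (L : nat) (n : nat -> nat).
Variables (p : Param R L n) (Q : forall k : nat, 'M[R]_(n k)) (pr : Param R L (nred L n)).
Hypothesis QR : QR_output p Q pr.

Lemma QR_output_orthogonal k : (k <= L)%N -> Q k *m (Q k)^T = 1%:M.
Proof.
have [Q0 QL Q_orth _] := QR; case: (posnP k) => [->|k_gt0]; first by rewrite Q0 trmx1 mul1mx.
rewrite leq_eqVlt => /orP[/eqP ->|lt_kL]; first by rewrite QL trmx1 mul1mx.
by apply: Q_orth; rewrite k_gt0 lt_kL.
Qed.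

Lemma QR_output_block (i : 'I_L) :
  invmx (Q i.+1) *m QR_A p Q i = padmx (row_mx (pr.2 i) (pr.1 i)).
Proof.
have [_ QL _ HA] := QR; have := HA i; case: ifP => [_ [_ ->]|last_i ->].
  rewrite -!mulmxA mulKmx ?Inc_mulmx //.
  exact: orthogonal_unitmx (QR_output_orthogonal (ltn_ord i)).
have iL : i.+1 = L by apply/eqP; rewrite eqn_leq ltn_ord leqNgt last_i.
have Q1 : Q i.+1 = 1%:M by move: (i.+1) iL => k ->.
rewrite Q1 invmx1 mul1mx padmxK //.
by rewrite /nred iL eqxx.
Qed.

Lemma QR_output_residual : red_residual (psub (pact (Qinv Q) p) (piota pr)).
Proof.
split => [i r c Hc|i r]; have := QR_output_block i;
  rewrite /QR_A mul_mx_row padmx_row_mx => /eq_row_mx[Eb EW];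
  rewrite /psub /pact /Qinv /piota /= ?invmxK -[LHS]mget_ord mgetB mget_padmx ?ltn_ord //.
  move/(congr1 (fun M : 'M[R]_(n i.+1, nred L n i) => M r (Ordinal Hc))): EW.
  by rewrite !mulmxA mulmx_Inc mxE [RHS]mxE /= mget_ord => <-; rewrite subrr.
by rewrite Eb mget_padmx ?ltn_ord // subrr.
Qed.

End QRCompression.

Theorem theorem4 (R : realType) (L : nat) (n : nat -> nat) (h : nat -> R -> R)
    (N : nat) (xs : 'I_N -> 'cV[R]_(n 0)) (ys : 'I_N -> 'cV[R]_(n L))
    (C : 'cV[R]_(n L) -> 'cV[R]_(n L) -> R) (eta : R)
    (p : Param R L n) (Q : forall k : nat, 'M[R]_(n k)) (pr : Param R L (nred L n)) :
  0 < eta ->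
  pdifferentiable (loss h xs ys C) ->
  pdifferentiable (loss_red h xs ys C) ->
  QR_output p Q pr ->
  let U := psub (pact (Qinv Q) p) (piota pr) in
  forall k : nat,
    iter k (gd (loss h xs ys C) eta) p
      = pact Q (iter k (gd (loss h xs ys C) eta) (pact (Qinv Q) p))
    /\
    iter k (gdproj (loss h xs ys C) eta) (pact (Qinv Q) p)
      = padd (piota (iter k (gd (loss_red h xs ys C) eta) pr)) U.
Proof.
move=> _ loss_diff _ QR U k.
have Q_orth := QR_output_orthogonal QR; have [Q0 QL _ _] := QR.
split.
  elim: k => [|k IH] /=; first by rewrite pactK.
  by rewrite IH gd_pact // => q; rewrite loss_pact.
elim: k => [|k IH] /=; last by rewrite IH gdproj_iota //; exact: QR_output_residual.
by apply: param_ext => [i r c|i r]; rewrite !mxE addrC subrK.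
Qed.
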